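(* Let $k\ge 2$. There exist hypercube deliberation spaces with arbitrarily large numbers $n$ of agents in which a deliberation may take $\Omega(2^{\sqrt{n}/2})$ $k$-compromise transitions. That is, there are a constant $c>0$ and, for arbitrarily large $n$, a hypercube deliberation space with $n$ agents, an initial coalition structure, and a sequence of at least $c\,2^{\sqrt{n}/2}$ consecutive $k$-compromise transitions starting from that structure.
   Context: A hypercube deliberation space of dimension $d$ consists of the proposal set $\{0,1\}^d$, a finite multiset of $n$ agents, each a point of $\{0,1\}^d$, and the Hamming distance $\rho$; the status quo is $\mathbf{0}$. An agent $v$ supports a proposal $p$ if $\rho(v,p)<\rho(v,\mathbf{0})$. A coalition is a pair $(C,p)$ where $C$ is a set of agents and $p$ is a proposal supported by all agents of $C$. A coalition structure is a partition of the agents into coalitions. A $k$-compromise transition from a coalition structure is the following move. Take at most $k$ of its coalitions $(C_1,p_1),\dots,(C_\ell,p_\ell)$ with $\ell\le k$, a set $S\subseteq C_1\cup\dots\cup C_\ell$ meeting each $C_i$, and a proposal $p$ supported by all agents of $S$ with $|S|>|C_i|$ for every $i$. The agents of $S$ leave their coalitions and form the coalition $(S,p)$. A deliberation is a sequence of such transitions. *)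

From Stdlib Require Import Reals.
From mathcomp Require Import all_boot.

Set Implicit Arguments.
Unset Strict Implicit.
Unset Printing Implicit Defensive.

Definition proposal (d : nat) := {ffun 'I_d -> bool}.

Definition status_quo (d : nat) : proposal d := [ffun _ => false].

Definition hamming (d : nat) (u v : proposal d) : nat := #|[set i | u i != v i]|.

Definition supports (d : nat) (v p : proposal d) : bool :=
  hamming v p < hamming v (status_quo d).

(* Agents are indexed by 'I_n; pos gives their location (a multiset of n points). *)
Definition coalition (n d : nat) := ({set 'I_n} * proposal d)%type.

Definition is_coalition (n d : nat) (pos : 'I_n -> proposal d) (x : coalition n d) : bool :=
  [forall i in x.1, supports (pos i) x.2].

Definition is_coalition_structure (n d : nat) (pos : 'I_n -> proposal d)
    (CS : {set coalition n d}) : Prop :=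
  partition [set x.1 | x in CS] [set: 'I_n]
  /\ {in CS &, forall x y, x.1 = y.1 -> x = y}
  /\ (forall x, x \in CS -> is_coalition pos x).

(* A k-compromise transition from CS to CS'. T is the set of (at most k, at least
   one) chosen coalitions of CS; S the deviating agents, p their new proposal. *)
Definition k_compromise_step (n d : nat) (pos : 'I_n -> proposal d) (k : nat)
    (CS CS' : {set coalition n d}) : Prop :=
  exists (T : {set coalition n d}) (S : {set 'I_n}) (p : proposal d),
    T \subset CS /\ 0 < #|T| <= k /\
    S \subset \bigcup_(x in T) x.1 /\
    (forall x, x \in T -> (S :&: x.1 != set0) /\ (#|x.1| < #|S|)) /\
    (forall i, i \in S -> supports (pos i) p) /\
    CS' = (S, p) |: [set ((x.1 :\: S), x.2) | x in CS & x.1 :\: S != set0].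

From Stdlib Require Import Reals Lra.
From mathcomp Require Import all_boot zify.

Set Implicit Arguments.
Unset Strict Implicit.
Unset Printing Implicit Defensive.

(* Place all agents at the point 1 of {0,1}^1.  Then every partition of the
   agents, each block proposing 1, is a coalition structure, and a
   2-compromise transition may merge x agents of a block A with y agents of a
   block B whenever x + y exceeds both |A| and |B|.  Given blocks of every
   size 1..i and a second block of size i, a block of size i and a singleton
   can be turned into a block of size i+1 by exactly grow_cost i such merges:
   split the two (i+2)-blocks into blocks of sizes i+3, i and 1, then regrow
   i to i+1 and i+1 to i+2 recursively.  Hence grow_cost grows like the
   Fibonacci numbers: grow_cost (2j) + 1 >= 2^j.
   The initial configuration for i = 2j is assembled from O(j^2) singletons. *)

Lemma subset_of_card (T : finType) (A : {set T}) m :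
  m <= #|A| -> exists2 S : {set T}, S \subset A & #|S| = m.
Proof.
move/card_geqP=> [s [s_uniq s_size sA]]; exists [set x in s].
  by apply/subsetP=> x; rewrite inE; apply: sA.
by rewrite cardsE (card_uniqP s_uniq).
Qed.

Fixpoint grow_cost (i : nat) : nat :=
  if i is i'.+1 then (if i' is j.+1 then (grow_cost j + grow_cost i').+1 else 1) else 0.

Lemma leq_grow_costS i : grow_cost i <= grow_cost i.+1.
Proof.
case: i => // i.
by have -> : grow_cost i.+2 = (grow_cost i + grow_cost i.+1).+1 by []; lia.
Qed.

Lemma leq_exp2_grow_cost j : 2 ^ j <= (grow_cost (2 * j)).+1.
Proof.
elim: j => [// | j IH]; have -> : 2 * j.+1 = (2 * j).+2 by lia.
have -> : grow_cost (2 * j).+2 = (grow_cost (2 * j) + grow_cost (2 * j).+1).+1 by [].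
by rewrite expnS; have := leq_grow_costS (2 * j); lia.
Qed.

Section Merging.

Variable T : finType.
Implicit Types (P Q : {set {set T}}) (A B C D S : {set T}).

Definition carve P S := S |: [set C :\: S | C in P & C :\: S != set0].

Definition nblocks P k := \sum_(C in P) (#|C| == k).

Lemma carve_inj P S : trivIset P ->
  {in [set C in P | C :\: S != set0] &, injective (fun C => C :\: S)}.
Proof.
move=> triv_P C1 C2 /[!inE] /andP[C1P /set0Pn[z zC1S]] /andP[C2P _] eqCS.
have /[!inE] /andP[_ zC1] := zC1S; move: zC1S; rewrite eqCS => /[!inE] /andP[_ zC2].
by apply: contraTeq zC2 => C12; rewrite (disjointFr (trivIsetP triv_P _ _ C1P C2P C12) zC1).
Qed.

Lemma carve_disjoint P S B : B \in [set C :\: S | C in P & C :\: S != set0] -> [disjoint S & B].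
Proof.
by case/imsetP=> C' _ ->; rewrite disjoint_sym disjoints_subset setDE subsetIr.
Qed.

Lemma carve_partition P D S :
  partition P D -> S != set0 -> S \subset D -> partition (carve P S) D.
Proof.
move=> /and3P[/eqP cover_P triv_P P0] S0 SD; apply/and3P; split.
- rewrite /cover big_setU1 /=; last first.
    by apply: contraNN S0 => /carve_disjoint; rewrite -setI_eq0 setIid.
  apply/eqP/setP=> z; rewrite inE; case zS: (z \in S) => /=; first by rewrite (subsetP SD).
  rewrite -cover_P; apply/bigcupP/bigcupP.
    by case=> _ /imsetP[C /[!inE] /andP[CP _] ->] /setDP[zC _]; exists C.
  case=> C CP zC.
  exists (C :\: S); last by rewrite inE zS.
  by apply/imsetP; exists C => //; rewrite inE CP; apply/set0Pn; exists z; rewrite inE zS.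
- apply/trivIsetP=> C1 C2 /setU1P[-> | C1Q] /setU1P[-> | C2Q] C12.
  + by rewrite eqxx in C12.
  + exact: carve_disjoint C2Q.
  + by rewrite disjoint_sym; apply: carve_disjoint C1Q.
  + case/imsetP: C1Q C12 => C1' /[!inE] /andP[C1P _] ->.
    case/imsetP: C2Q => C2' /[!inE] /andP[C2P _] -> C12.
    have C12' : C1' != C2' by apply: contraNneq C12 => ->.
    by apply: disjointWl (subsetDl _ _) (disjointWr (subsetDl _ _) _); apply: (trivIsetP triv_P).
- rewrite !inE negb_or eq_sym S0 /=; apply/imsetP=> [[C]].
  by rewrite inE => /andP[_ /eqP CS0] /esym.
Qed.

(* Only positive sizes are counted: the leftovers of a carve may be empty. *)
Lemma nblocks_carve P S k : trivIset P -> S != set0 -> 0 < k ->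
  nblocks (carve P S) k = (#|S| == k) + \sum_(C in P) (#|C :\: S| == k).
Proof.
move=> triv_P S0 k0; rewrite /nblocks big_setU1 /=; last first.
  by apply: contraNN S0 => /carve_disjoint; rewrite -setI_eq0 setIid.
rewrite big_imset /=; last exact: carve_inj.
congr (_ + _); rewrite big_mkcond [RHS]big_mkcond /=; apply: eq_bigr => C _.
rewrite inE; case: (C \in P) => //=.
by case: eqP => // ->; rewrite cards0; case: k k0.
Qed.

Lemma nblocksE P k : nblocks P k = #|[set C in P | #|C| == k]|.
Proof. by rewrite -sum1dep_card big_mkcondr; apply: eq_bigr => C _; case: eqP. Qed.

Lemma nblocks_pair P a b : 1 + (a == b) <= nblocks P a -> 0 < nblocks P b ->
  exists A B, [/\ A \in P, B \in P, A != B, #|A| = a & #|B| = b].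
Proof.
rewrite !nblocksE; case: eqVneq => [<- | ab] /=.
  move=> /card_gt1P[A [B [/[!inE] /andP[AP /eqP Aa] /andP[BP /eqP Ba] AB]]] _.
  by exists A, B.
move=> /card_gt0P[A /[!inE] /andP[AP /eqP Aa]] /card_gt0P[B /[!inE] /andP[BP /eqP Bb]].
by exists A, B; split=> //; apply: contra_neq ab => AB; rewrite -Aa -Bb AB.
Qed.

Lemma partition_singletons : partition [set [set x] | x : T] [set: T].
Proof.
apply/and3P; split.
- apply/eqP/setP=> x; rewrite inE; apply/bigcupP.
  by exists [set x]; rewrite ?imset_f ?set11.
- apply/trivIsetP=> _ _ /imsetP[x _ ->] /imsetP[y _ ->] xy.
  by rewrite disjoints1 inE; apply: contra_neq xy => ->.
- apply/imsetP=> [[x _ /setP/(_ x)]].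
  by rewrite !inE eqxx.
Qed.

Lemma nblocks_singletons : nblocks [set [set x] | x : T] 1 = #|T|.
Proof.
rewrite /nblocks big_imset /=; last by move=> x y _ _; apply: set1_inj.
by rewrite -sum1_card; apply: eq_bigr => x _; rewrite cards1.
Qed.

Definition merge_move P A B S := [&& A \in P, B \in P, A != B, S \subset A :|: B,
  S :&: A != set0, S :&: B != set0, #|A| < #|S| & #|B| < #|S|].

Definition merge_step P P' := exists A B S, merge_move P A B S /\ P' = carve P S.

Lemma merge_move_nonempty P A B S : merge_move P A B S -> S != set0.
Proof.
by case/and5P=> _ _ _ _ /andP[SA0 _]; apply: contraNneq SA0 => ->; rewrite set0I.
Qed.

Lemma nblocks_merge P A B S k : trivIset P -> merge_move P A B S -> 0 < k ->
  nblocks (carve P S) k + (#|A| == k) + (#|B| == k) =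
  nblocks P k + (#|S| == k) + (#|A :\: S| == k) + (#|B :\: S| == k).
Proof.
move=> triv_P mv k0; have S0 := merge_move_nonempty mv.
move/and5P: mv => [AP BP AB SAB _].
have split2 F : \sum_(C in P) F C = F A + F B + \sum_(C in P | (C != A) && (C != B)) F C.
  rewrite (bigD1 A) // (bigD1 B) /=; last by rewrite BP eq_sym.
  by rewrite addnA; congr (_ + _ + _); apply: eq_bigl => C; rewrite andbA.
have untouched C : C \in P -> C != A -> C != B -> C :\: S = C.
  move=> CP CA CB; apply/setDidPl; rewrite disjoint_sym.
  apply: disjointWl SAB _; rewrite -setI_eq0 setIUl setU_eq0 !setI_eq0.
  by rewrite !(trivIsetP triv_P) // eq_sym.
rewrite nblocks_carve // /nblocks !split2.
have -> : \sum_(C in P | (C != A) && (C != B)) (#|C :\: S| == k) =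
          \sum_(C in P | (C != A) && (C != B)) (#|C| == k).
  by apply: eq_bigr => C /andP[CP /andP[CA CB]]; rewrite untouched.
lia.
Qed.

Lemma merge_move_exists P A B x y : trivIset P -> A \in P -> B \in P -> A != B ->
  0 < x <= #|A| -> 0 < y <= #|B| -> #|A| < x + y -> #|B| < x + y ->
  exists2 S, merge_move P A B S &
    [/\ #|S| = x + y, #|A :\: S| = #|A| - x & #|B :\: S| = #|B| - y].
Proof.
move=> triv_P AP BP AB /andP[x0 xA] /andP[y0 yB] Axy Bxy.
have dAB := trivIsetP triv_P A B AP BP AB.
have [SA SAA SAx] := subset_of_card xA.
have [SB SBB SBy] := subset_of_card yB.
have SA_B : [disjoint SA & B] := disjointWl SAA dAB.
have SB_A : [disjoint SB & A] by rewrite disjoint_sym in dAB; apply: disjointWl SBB dAB.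
have SIA : (SA :|: SB) :&: A = SA.
  by rewrite setIUl (disjoint_setI0 SB_A) setU0; apply/setIidPl.
have SIB : (SA :|: SB) :&: B = SB.
  by rewrite setIUl (disjoint_setI0 SA_B) set0U; apply/setIidPl.
have Sxy : #|SA :|: SB| = x + y.
  by rewrite cardsU (disjoint_setI0 (disjointWr SBB SA_B)) cards0 SAx SBy subn0.
exists (SA :|: SB); last by rewrite !cardsD !(setIC _ (SA :|: SB)) SIA SIB SAx SBy.
apply/and5P; split=> //; first by rewrite setUSS.
by rewrite SIA SIB -!card_gt0 SAx SBy Sxy x0 y0 Axy Bxy.
Qed.

Inductive moves : {set {set T}} -> {set {set T}} -> nat -> Prop :=
| moves0 P : partition P [set: T] -> moves P P 0
| movesS P P' Q m : partition P [set: T] -> merge_step P P' -> moves P' Q m ->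
    moves P Q m.+1.

Lemma moves_partition P Q m : moves P Q m -> partition Q [set: T].
Proof. by elim. Qed.

Lemma moves_trans P1 P2 P3 m1 m2 :
  moves P1 P2 m1 -> moves P2 P3 m2 -> moves P1 P3 (m1 + m2).
Proof. by elim=> // P P' Q m P_part PP' _ IH /IH; apply: movesS. Qed.

Lemma moves_seq P Q m : moves P Q m -> exists g : nat -> {set {set T}},
  g 0 = P /\ forall i, i < m -> partition (g i) [set: T] /\ merge_step (g i) (g i.+1).
Proof.
elim=> [P' _ | P' P'' Q' m' P'_part step _ [g [g0 g_steps]]]; first by exists (fun=> P').
exists (fun i => if i is i'.+1 then g i' else P'); split=> // [[|i]] /= ltim.
  by rewrite g0.
exact: g_steps.
Qed.

Lemma merge_blocks P A B x y : partition P [set: T] -> A \in P -> B \in P -> A != B ->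
  0 < x <= #|A| -> 0 < y <= #|B| -> #|A| < x + y -> #|B| < x + y ->
  exists2 Q, moves P Q 1 & forall k, 0 < k ->
    nblocks Q k + (#|A| == k) + (#|B| == k) =
    nblocks P k + (x + y == k) + (#|A| - x == k) + (#|B| - y == k).
Proof.
move=> P_part AP BP AB xA yB Axy Bxy.
have /and3P[_ triv_P _] := P_part.
have [S mv [<- <- <-]] := merge_move_exists triv_P AP BP AB xA yB Axy Bxy.
exists (carve P S); last by move=> k; apply: nblocks_merge.
apply: (movesS P_part) (moves0 _); first by exists A, B, S.
by apply: carve_partition; rewrite ?subsetT ?(merge_move_nonempty mv).
Qed.

Lemma grow_block i P : 0 < i -> partition P [set: T] ->
  (forall k, 0 < k <= i -> 0 < nblocks P k) -> 1 < nblocks P i ->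
  exists2 Q, moves P Q (grow_cost i) & forall k, 0 < k ->
    nblocks Q k + (i == k) + (1 == k) = nblocks P k + (i.+1 == k).
Proof.
elim/ltn_ind: i P => -[// | [| j]] IH P _ P_part P_sizes P_i.
  have [A [B [AP BP AB A1 B1]]] := nblocks_pair (a := 1) (b := 1) P_i (P_sizes 1 isT).
  have [Q PQ E] := merge_blocks P_part AP BP AB (x := 1) (y := 1)
    ltac:(by rewrite A1) ltac:(by rewrite B1) ltac:(by rewrite A1) ltac:(by rewrite B1).
  by exists Q => // k k0; have := E k k0; rewrite A1 B1; lia.
have [A [B [AP BP AB Aj Bj]]] := nblocks_pair (P := P) (a := j.+2) (b := j.+2)
  ltac:(by rewrite eqxx) (P_sizes j.+2 ltac:(by rewrite leqnn)).
have [P1 PP1 E1] := merge_blocks P_part AP BP AB (x := 2) (y := j.+1)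
  ltac:(rewrite Aj; lia) ltac:(rewrite Bj; lia) ltac:(rewrite Aj; lia) ltac:(rewrite Bj; lia).
rewrite Aj Bj in E1.
have P1_part := moves_partition PP1.
have [P2 P1P2 E2] : exists2 P2, moves P1 P2 (grow_cost j) & forall k, 0 < k ->
    nblocks P2 k + (j == k) + (1 == k) = nblocks P1 k + (j.+1 == k).
  case: j {Aj Bj} IH P_sizes P_i E1 => [|j] IH P_sizes P_i E1.
    by exists P1 => [|k k0]; [apply: moves0 | lia].
  apply: IH => // [k /andP[k0 kj] | ].
    by have := E1 k k0; have := P_sizes k; lia.
  by have := E1 j.+1 isT; have := P_sizes j.+1; lia.
have [P3 P2P3 E3] : exists2 P3, moves P2 P3 (grow_cost j.+1) & forall k, 0 < k ->
    nblocks P3 k + (j.+1 == k) + (1 == k) = nblocks P2 k + (j.+2 == k).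
  apply: IH (moves_partition P1P2) _ _ => // [k /andP[k0 kj] | ].
    by have := E1 k k0; have := E2 k k0; have := P_sizes k; lia.
  by have := E1 j.+1 isT; have := E2 j.+1 isT; have := P_sizes j.+1; lia.
exists P3 => [|k k0]; last by have := E1 k k0; have := E2 k k0; have := E3 k k0; lia.
have -> : grow_cost j.+2 = 1 + grow_cost j + grow_cost j.+1 by rewrite add1n.
exact: moves_trans (moves_trans PP1 P1P2) P2P3.
Qed.

Lemma build_block s P : 0 < s -> partition P [set: T] ->
  s <= nblocks P 1 -> exists Q m, [/\ moves P Q m,
    nblocks Q 1 + s = nblocks P 1 + (s == 1) &
    forall k, 1 < k -> nblocks Q k = nblocks P k + (s == k)].
Proof.
elim: s => [// | [_ _ | s IH _]] P_part P_s.
  by exists P, 0; split=> // [|k k1]; [apply: moves0 | lia].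
have [Q1 [m1 [PQ1 Q1_1 Q1_k]]] := IH isT P_part ltac:(lia).
have [A [B [AQ1 BQ1 AB As B1]]] :
    exists A B, [/\ A \in Q1, B \in Q1, A != B, #|A| = s.+1 & #|B| = 1].
  apply: nblocks_pair; last by lia.
  by case: s {IH} P_s Q1_1 Q1_k => [|s] P_s Q1_1 Q1_k; [lia | rewrite Q1_k //; lia].
have [Q Q1Q E] := merge_blocks (moves_partition PQ1) AQ1 BQ1 AB (x := s.+1) (y := 1)
  ltac:(rewrite As; lia) ltac:(rewrite B1; lia) ltac:(rewrite As; lia) ltac:(rewrite B1; lia).
rewrite As B1 in E.
exists Q, (m1 + 1); split=> [|| k k1]; first exact: moves_trans PQ1 Q1Q.
  by have := E 1 isT; lia.
by have := E k ltac:(lia); have := Q1_k k k1; lia.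
Qed.

Lemma staircase c r P : partition P [set: T] ->
  c * c + r <= nblocks P 1 -> exists Q m,
    [/\ moves P Q m, forall k, 1 < k <= c -> 0 < nblocks Q k & r <= nblocks Q 1].
Proof.
elim: c r => [| c IH] r P_part P_r.
  by exists P, 0; split=> // [|k]; [apply: moves0 | lia].
have [Q1 [m1 [PQ1 Q1_sizes Q1_r]]] := IH (r + c.+1) P_part ltac:(lia).
have [Q [m2 [Q1Q Q_1 Q_k]]] := build_block (s := c.+1) isT (moves_partition PQ1) ltac:(lia).
exists Q, (m1 + m2); split=> [|k /andP[k1 kc] |]; first exact: moves_trans PQ1 Q1Q.
  by rewrite Q_k //; have := Q1_sizes k; lia.
by move: Q_1; lia.
Qed.

Lemma prepare_grow_block c P : 1 < c ->
  partition P [set: T] -> c * c + c.+1 <= nblocks P 1 -> exists Q m,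
    [/\ moves P Q m, forall k, 0 < k <= c -> 0 < nblocks Q k & 1 < nblocks Q c].
Proof.
move=> c1 P_part P_n.
have [Q1 [m1 [PQ1 Q1_sizes Q1_r]]] := staircase P_part P_n.
have [Q [m2 [Q1Q Q_1 Q_k]]] := build_block (s := c) ltac:(lia) (moves_partition PQ1) ltac:(lia).
exists Q, (m1 + m2); split=> [|[// | [| k]] /andP[_ kc] |]; first exact: moves_trans PQ1 Q1Q.
- by move: Q_1; lia.
- by rewrite Q_k //; have := Q1_sizes k.+2; lia.
- by rewrite Q_k //; have := Q1_sizes c; lia.
Qed.

End Merging.

Definition ones : proposal 1 := [ffun => true].

Lemma supports_ones : supports ones ones.
Proof.
rewrite /supports /hamming.
have -> : [set i | ones i != ones i] = set0 by apply/setP=> i; rewrite !inE eqxx.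
have -> : [set i | ones i != status_quo 1 i] = setT by apply/setP=> i; rewrite !inE !ffunE.
by rewrite cards0 cardsT card_ord.
Qed.

Definition coalitions_of n (P : {set {set 'I_n}}) : {set coalition n 1} :=
  [set (C, ones) | C in P].

Lemma coalitions_of_structure n (P : {set {set 'I_n}}) :
  partition P [set: 'I_n] -> is_coalition_structure (fun=> ones) (coalitions_of P).
Proof.
move=> P_part; split; first by rewrite -imset_comp imset_id.
split; first by move=> _ _ /imsetP[C _ ->] /imsetP[D _ ->] /= ->.
by move=> _ /imsetP[C _ ->]; apply/forall_inP=> i _; apply: supports_ones.
Qed.

Lemma merge_step_compromise n k (P P' : {set {set 'I_n}}) : 1 < k -> merge_step P P' ->
  k_compromise_step (fun=> ones) k (coalitions_of P) (coalitions_of P').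
Proof.
move=> k1 [A [B [S [/and5P[AP BP AB SAB /and4P[SA0 SB0 AS BS]] ->]]]].
exists [set (A, ones); (B, ones)], S, ones; split.
  by apply/subsetP=> _ /set2P[] ->; apply: imset_f.
split; first by rewrite cards2; case: (_ != _); lia.
split.
  apply/subsetP=> z /(subsetP SAB) /setUP[zA | zB]; apply/bigcupP.
    by exists (A, ones); rewrite ?set21.
  by exists (B, ones); rewrite ?set22.
split; first by move=> _ /set2P[] ->.
split; first by move=> i _; apply: supports_ones.
rewrite /coalitions_of imsetU1; congr (_ |: _).
rewrite -imset_comp; apply/setP=> x; apply/imsetP/imsetP=> [[C /[!inE] /andP[CP CS] ->] | ].
  by exists (C, ones); rewrite // inE imset_f.
by case=> _ /[!inE] /andP[/imsetP[C CP ->] CS] ->; exists C; rewrite // inE CP.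
Qed.

Local Open Scope R_scope.

Lemma INR_expn2 j : INR (2 ^ j)%N = 2 ^ j.
Proof. by elim: j => [// | j IH]; rewrite expnS mulnE mult_INR IH. Qed.

Lemma Rpower_sqrt_le (n j : nat) :
  (n <= (2 * j) ^ 2)%N -> Rpower 2 (sqrt (INR n) / 2) <= INR (2 ^ j)%N.
Proof.
move=> /leP /le_INR; rewrite -mulnn !mulnE !mult_INR /= => n_le.
have j0 := pos_INR j.
have sqrt_n : sqrt (INR n) <= 2 * INR j.
  rewrite -(sqrt_square (2 * INR j)); last lra.
  by apply: sqrt_le_1_alt; lra.
rewrite INR_expn2 -Rpower_pow; last lra.
by apply: Rle_Rpower; lra.
Qed.

Local Close Scope R_scope.

Theorem mainTheorem4 :
  forall k : nat, 2 <= k ->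
  exists c : R, Rlt 0 c /\
  forall N : nat, exists (n d : nat) (pos : 'I_n -> proposal d)
    (f : nat -> {set coalition n d}) (m : nat),
    N <= n /\
    is_coalition_structure pos (f 0) /\
    (forall i, i < m -> is_coalition_structure pos (f i) /\
                        k_compromise_step pos k (f i) (f i.+1)) /\
    Rle (Rmult c (Rpower 2 (Rdiv (sqrt (INR n)) 2))) (INR m).
Proof.
move=> k k2; exists (Rinv 4); split; first lra.
move=> N; pose j := N.+1; pose c := 2 * j; pose n := c * c + c.+1.
have P0_n := nblocks_singletons 'I_n; rewrite card_ord in P0_n.
have [Q1 [m1 [PQ1 Q1_sizes Q1_c]]] :=
  prepare_grow_block (c := c) ltac:(lia) (partition_singletons 'I_n) ltac:(lia).
have [Q2 Q1Q2 _] := grow_block (i := c) ltac:(lia) (moves_partition PQ1) Q1_sizes Q1_c.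
have [g [g0 g_steps]] := moves_seq (moves_trans PQ1 Q1Q2).
exists n, 1, (fun=> ones), (fun i => coalitions_of (g i)), (m1 + grow_cost c).
split; first lia.
split; first by rewrite g0; apply/coalitions_of_structure/partition_singletons.
split.
  move=> i /g_steps[gi_part gi_step].
  by split; [apply: coalitions_of_structure | apply: merge_step_compromise].
have n_le : n <= (2 * j.+1) ^ 2 by rewrite /n /c; lia.
have cost_ge : 2 ^ j.+1 <= 4 * (m1 + grow_cost c).
  have := leq_exp2_grow_cost j; rewrite /c /j !expnS.
  by have := expn_gt0 2 N; lia.
have /leP /le_INR := cost_ge; rewrite mulnE mult_INR [INR 4]/=.
by have := Rpower_sqrt_le n_le; lra.
Qed.
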